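(* Let $r(n)$ be the Golay–Rudin–Shapiro sequence defined by $r(0)=1$, $r(2n)=r(n)$, $r(2n+1)=(-1)^n r(n)$. Then in the ring of formal power series $\mathbb{Z}[[z]]$, $$\sum_{k\ge 0}(-1)^k z^{2^k-1}=\cfrac{1}{1+\cfrac{r(0)r(2)z}{1+\cfrac{r(1)r(3)z}{1+\cfrac{r(2)r(4)z}{1+\cdots}}}}.$$
   Context: The infinite continued fraction $\frac{1}{1+\frac{c_0z}{1+\frac{c_1z}{1+\cdots}}}$ with $c_n=r(n)r(n+2)\in\{\pm1\}$ is understood as the formal power series limit of its finite truncations (the $N$-th truncation agrees with the limit up to order $z^N$). Explicitly the right-hand side is $\frac{1}{1+\frac{z}{1-\frac{z}{1+\frac{z}{1-\cdots}}}}$ at the start. *)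

From mathcomp Require Import all_boot all_order all_algebra.
Set Implicit Arguments. Unset Strict Implicit. Unset Printing Implicit Defensive.
Import Order.TTheory GRing.Theory Num.Theory.
Local Open Scope ring_scope.

(* A formal power series in Z[[z]]: its coefficient sequence. *)
Definition ps := nat -> int.

Definition ps_one : ps := fun n => if n == 0%N then 1 else 0.
Definition ps_add (f g : ps) : ps := fun n => f n + g n.
Definition ps_scale (c : int) (f : ps) : ps := fun n => c * f n.
Definition ps_mulz (f : ps) : ps := fun n => if n is m.+1 then f m else 0.
Definition ps_mul (f g : ps) : ps :=
  fun n => \sum_(i < n.+1) f i * g (n - i)%N.

Fixpoint ps_inv_seq (f : ps) (n : nat) : seq int :=
  match n with
  | 0 => [:: 1]
  | n'.+1 => let s := ps_inv_seq f n' in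
             rcons s (- \sum_(j < n'.+1) f j.+1 * nth 0 s (n' - j)%N)
  end.

(* Multiplicative inverse in Z[[z]] of a series with constant term 1
   (only ever applied to such series below). *)
Definition ps_inv (f : ps) : ps := fun n => nth 0 (ps_inv_seq f n) n.

(* N-th truncation of the continued fraction
     1/(1 + c_m z/(1 + c_{m+1} z/(1 + ... /(1 + c_{m+N-1} z))))
   with cf_trunc c m 0 = 1. *)
Fixpoint cf_trunc (c : nat -> int) (m N : nat) : ps :=
  match N with
  | 0 => ps_one
  | N'.+1 => ps_inv (ps_add ps_one (ps_scale (c m) (ps_mulz (cf_trunc c m.+1 N'))))
  end.

(* Coefficients of sum_{k>=0} (-1)^k z^(2^k - 1); only k <= n can contribute
   to the coefficient of z^n since 2^k - 1 >= k. *)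
Definition lhs_series : ps :=
  fun n => \sum_(k < n.+1) (if (2 ^ k - 1)%N == n then (-1) ^+ k else 0).

(* Let F_m be the tail 1/(1 + c_m z/(1 + c_{m+1} z/(1 + ...))) of the continued
   fraction and d_n = r(n) r(n+1).  The Rudin-Shapiro recurrences give
   c_{2n} = d_n, c_{2n+1} = -d_n and c_n = d_n d_{n+1}, and these relations make
   the even part of the continued fraction contract onto itself:
   F_{2n}(z) = 1 - d_n z F_n(z^2).  Since d_0 = 1, F_0 satisfies
   f(z) = 1 - z f(z^2), which determines a series with constant term 1 and is
   also satisfied by the sum of the (-1)^k z^(2^k-1).  All of this is carried out
   on truncations, as congruences of integer polynomials modulo z^K. *)

From mathcomp Require Import all_boot all_order all_algebra.
From mathcomp Require Import ring zify.
Import GRing.Theory.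
Local Open Scope ring_scope.

Set Implicit Arguments. Unset Strict Implicit.

Implicit Types (K L : nat) (p q s A Y P Q U V W : {poly int}) (f g : ps).

Definition eqmodX K p q := exists h, p - q = 'X^K * h.

Lemma eqmodXP K p q : eqmodX K p q <-> (forall i, (i < K)%N -> p`_i = q`_i).
Proof.
split=> [[h Eh] i ltiK | eq_pq].
  by apply/eqP; rewrite -subr_eq0 -coefB Eh coefXnM ltiK.
have take0 : take_poly K (p - q) = 0.
  apply/polyP => i; rewrite coef_take_poly coef0 coefB.
  by case: ifP => // /eq_pq ->; rewrite subrr.
exists (drop_poly K (p - q)).
by rewrite -{1}(poly_take_drop K (p - q)) take0 add0r mulrC.
Qed.

Lemma eqmodX_refl K p : eqmodX K p p.
Proof. by exists 0; rewrite subrr mulr0. Qed.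

Lemma eqmodX_trans K p q s : eqmodX K p q -> eqmodX K q s -> eqmodX K p s.
Proof.
by move=> [h Eh] [h' Eh']; exists (h + h'); rewrite mulrDr -Eh -Eh' addrA subrK.
Qed.

Lemma eqmodXM K p q p' q' :
  eqmodX K p q -> eqmodX K p' q' -> eqmodX K (p * p') (q * q').
Proof.
move=> [h Eh] [h' Eh']; exists (h * p' + q * h').
have -> : p * p' - q * q' = (p - q) * p' + q * (p' - q') by ring.
by rewrite Eh Eh'; ring.
Qed.

Lemma eqmodX_le K K' p q : (K <= K')%N -> eqmodX K' p q -> eqmodX K p q.
Proof.
move=> leKK' /eqmodXP eq_pq; apply/eqmodXP => i ltiK.
by rewrite eq_pq ?(leq_trans ltiK).
Qed.

Lemma eqmodX_compX2 K p q :
  eqmodX K p q -> eqmodX K.*2 (p \Po 'X^2) (q \Po 'X^2).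
Proof.
move=> [h Eh]; exists (h \Po 'X^2).
by rewrite -comp_polyB Eh comp_polyM comp_Xn_poly -exprM mul2n.
Qed.

Lemma eqmodX_inv_uniq K p q q' :
  eqmodX K (p * q) 1 -> eqmodX K (p * q') 1 -> eqmodX K q q'.
Proof.
move=> [h Eh] [h' Eh']; exists (q' * h - q * h').
have -> : q - q' = q' * (p * q - 1) - q * (p * q' - 1) by ring.
by rewrite Eh Eh'; ring.
Qed.

Lemma eqmodX_inv_sub K P Q U V :
  eqmodX K (P * U) 1 -> eqmodX K (Q * V) 1 -> eqmodX K (U - V) (U * V * (Q - P)).
Proof.
move=> [h Eh] [h' Eh']; exists (V * h - U * h').
have -> : U - V - U * V * (Q - P) = V * (P * U - 1) - U * (Q * V - 1) by ring.
by rewrite Eh Eh'; ring.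
Qed.

Lemma contraction_step K (d d' : int) A Y U V W :
  eqmodX K A (1 - d'%:P * 'X * Y) ->
  eqmodX K.+1 ((1 - d%:P * 'X * A) * U) 1 ->
  eqmodX K.+1 ((1 + (d * d')%:P * 'X^2 * Y) * V) 1 ->
  eqmodX K.+2 ((1 + d%:P * 'X * U) * W) 1 ->
  eqmodX K.+2 W (1 - d%:P * 'X * V).
Proof.
move=> [h Eh] hU hV hW; apply: eqmodX_inv_uniq hW _.
pose P := 1 - d%:P * 'X * (1 - d'%:P * 'X * Y).
pose Q := 1 + (d * d')%:P * 'X^2 * Y.
have hPU : eqmodX K.+1 (P * U) 1.
  apply: eqmodX_trans hU; apply: eqmodXM (eqmodX_refl _ _).
  exists (d%:P * h).
  have -> : P - (1 - d%:P * 'X * A) = d%:P * 'X * (A - (1 - d'%:P * 'X * Y)).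
    by rewrite /P; ring.
  by rewrite Eh exprS; ring.
(* Q - P = d X, so U - V = d X U V mod X^K.+1: the factors 1 + d X U and
   1 - d X V are inverse mod X^K.+2. *)
have [g Eg] := eqmodX_inv_sub hPU hV.
exists (d%:P * g).
have -> : (1 + d%:P * 'X * U) * (1 - d%:P * 'X * V) - 1 =
          d%:P * 'X * (U - V - U * V * (Q - P)).
  by rewrite /P /Q; ring.
by rewrite Eg !exprS; ring.
Qed.

Definition ps_trunc L f : {poly int} := \poly_(i < L) f i.

Definition cf_step (x : int) g : ps :=
  ps_inv (ps_add ps_one (ps_scale x (ps_mulz g))).

Lemma size_ps_inv_seq f n : size (ps_inv_seq f n) = n.+1.
Proof. by elim: n => //= n IHn; rewrite size_rcons IHn. Qed.

Lemma nth_ps_inv_seq f n k :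
  (k <= n)%N -> nth 0 (ps_inv_seq f n) k = ps_inv f k.
Proof.
elim: n => [|n IHn]; first by rewrite leqn0 => /eqP ->.
rewrite leq_eqVlt => /orP[/eqP -> //|ltkn].
by rewrite /= nth_rcons size_ps_inv_seq ltkn IHn.
Qed.

Lemma ps_invS f n :
  ps_inv f n.+1 = - \sum_(j < n.+1) f j.+1 * ps_inv f (n - j)%N.
Proof.
rewrite {1}/ps_inv /= nth_rcons size_ps_inv_seq ltnn eqxx.
by congr (- _); apply: eq_bigr => j _; rewrite nth_ps_inv_seq ?leq_subr.
Qed.

Lemma ps_trunc_mul_inv L f :
  f 0%N = 1 -> eqmodX L (ps_trunc L f * ps_trunc L (ps_inv f)) 1.
Proof.
move=> f0; apply/eqmodXP => i ltiL; rewrite coefM coef1.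
under eq_bigr => j _ do rewrite !coef_poly
  (leq_ltn_trans (leq_ord j) ltiL) (leq_ltn_trans (leq_subr _ _) ltiL).
case: i ltiL => [|i] _; first by rewrite big_ord1 f0 mul1r.
rewrite big_ord_recl f0 mul1r subn0 ps_invS.
under [X in _ + X]eq_bigr => j _ do rewrite subSS.
by rewrite addNr.
Qed.

Lemma ps_trunc_cf_step L x g :
  eqmodX L ((1 + x%:P * 'X * ps_trunc L g) * ps_trunc L (cf_step x g)) 1.
Proof.
rewrite /cf_step; set f := ps_add _ _.
have f0 : f 0%N = 1 by rewrite /f /ps_add /ps_scale /= mulr0 addr0.
apply: eqmodX_trans (ps_trunc_mul_inv L f0).
apply: eqmodXM (eqmodX_refl _ _); apply/eqmodXP => i ltiL.
rewrite coefD coef1 -mulrA coefCM coefXM !coef_poly ltiL.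
rewrite /f /ps_add /ps_one /ps_scale /ps_mulz.
by case: i ltiL => [|i] ltiL /=; rewrite ?mulr0 // (ltnW ltiL) add0r.
Qed.

Lemma cf_trunc_coef0 c m N : cf_trunc c m N 0%N = 1.
Proof. by case: N. Qed.

Lemma cf_truncS c m N : cf_trunc c m N.+1 = cf_step (c m) (cf_trunc c m.+1 N).
Proof. by []. Qed.

(* The coefficientwise form of f(z) = 1 - z f(z^2) modulo z^N. *)
Definition halving_eq_upto N (f : ps) :=
  f 0%N = 1 /\
  forall n, (n.+1 < N)%N -> f n.+1 = - (if (2 %| n)%N then f (n %/ 2)%N else 0).

Lemma halving_eq_upto_uniq N f g :
  halving_eq_upto N f -> halving_eq_upto N g -> forall n, (n < N)%N -> f n = g n.
Proof.
move=> [f0 fS] [g0 gS]; elim/ltn_ind => -[|n] IH ltnN; first by rewrite f0 g0.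
have lt_half : (n %/ 2 < n.+1)%N by rewrite ltnS leq_div.
by rewrite fS // gS // IH // (ltn_trans lt_half).
Qed.

Section Contraction.
Variables c d : nat -> int.
Hypothesis c_even : forall n, c (2 * n)%N = d n.
Hypothesis c_odd : forall n, c (2 * n).+1 = - d n.
Hypothesis c_mul : forall n, c n = d n * d n.+1.

Lemma cf_trunc_contraction K n N M L :
  (K <= N)%N -> (K <= (2 * M).+1)%N -> (K <= L)%N ->
  eqmodX K (ps_trunc L (cf_trunc c (2 * n) N))
           (1 - (d n)%:P * 'X * (ps_trunc L (cf_trunc c n M) \Po 'X^2)).
Proof.
elim/ltn_ind: K n N M => K IH n N M leKN leKM leKL.
case: K IH leKN leKM leKL => [|[|K]] IH leKN leKM leKL.
1,2: apply/eqmodXP => -[|//] lt0K; rewrite coefB coef1 -mulrA coefCM coefXM.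
1,2: by rewrite coef_poly (leq_trans lt0K leKL) cf_trunc_coef0 mulr0 subr0.
case: N leKN => [|[|a]] // leKN; case: M leKM => [|b] // leKM.
rewrite !cf_truncS c_even c_odd (c_mul n).
have hA : eqmodX K (ps_trunc L (cf_trunc c (2 * n).+2 a))
  (1 - (d n.+1)%:P * 'X * (ps_trunc L (cf_trunc c n.+1 b) \Po 'X^2)).
  by rewrite -add2n -mulnS; apply: IH; lia.
have hU := ps_trunc_cf_step L (- d n) (cf_trunc c (2 * n).+2 a).
rewrite polyCN !mulNr in hU.
have hV := eqmodX_compX2 (ps_trunc_cf_step L (d n * d n.+1) (cf_trunc c n.+1 b)).
rewrite comp_polyM comp_polyD !comp_polyM !comp_polyC comp_polyX polyC1 in hV.
have hW := ps_trunc_cf_step L (d n) (cf_step (- d n) (cf_trunc c (2 * n).+2 a)).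
apply: contraction_step hA (eqmodX_le _ hU) (eqmodX_le _ hV) (eqmodX_le _ hW); lia.
Qed.

Lemma cf_trunc_halving N : d 0%N = 1 -> halving_eq_upto N (cf_trunc c 0 N).
Proof.
move=> d0; split=> [|n ltnN]; first exact: cf_trunc_coef0.
have leN : (n.+2 <= (2 * N).+1)%N by lia.
have /eqmodXP/(_ n.+1 (ltnSn _)) :=
  cf_trunc_contraction 0 ltnN leN ltnN.
rewrite coefB coef1 -mulrA coefCM coefXM !coef_poly ltnN d0 mul1r muln0 /= => ->.
rewrite sub0r coef_comp_poly_Xn // coef_poly; case: ifP => // _.
by rewrite (leq_ltn_trans (leq_div n 2)) // ltnW.
Qed.
End Contraction.

Lemma lhs_seriesE n b : (n < b)%N ->
  lhs_series n = \sum_(k < b) (if (2 ^ k - 1 == n)%N then (-1) ^+ k else 0).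
Proof.
move=> ltnb; rewrite /lhs_series.
rewrite (big_ord_widen b (fun k => if (2 ^ k - 1 == n)%N then (-1) ^+ k else 0) ltnb).
rewrite big_mkcond /=.
apply: eq_bigr => k _; case: ltnP => // lenk; rewrite ifF //; apply/eqP.
by have := ltn_expl k (isT : (1 < 2)%N); lia.
Qed.

Lemma lhs_series_halving N : halving_eq_upto N lhs_series.
Proof.
split=> [|n _]; first by rewrite /lhs_series big_ord1.
rewrite {1}/lhs_series big_ord_recl /= add0r.
case: ifP => [/dvdnP[j ->] | odd_n].
  rewrite mulnK // (lhs_seriesE (n := j) (b := (j * 2).+1)); last by lia.
  rewrite -sumrN; apply: eq_bigr => k _.
  have pos_k := expn_gt0 2 k; rewrite /bump add1n expnS exprS mulN1r.
  have -> : (2 * 2 ^ k - 1 == (j * 2).+1)%N = (2 ^ k - 1 == j)%N.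
    by apply/eqP/eqP; lia.
  by case: eqP; rewrite ?oppr0.
rewrite oppr0 big1 // => k _; rewrite ifF //; apply/eqP.
have pos_k := expn_gt0 2 k; rewrite /bump add1n expnS; lia.
Qed.

Section RudinShapiro.
Variable r : nat -> int.
Hypothesis r0 : r 0%N = 1.
Hypothesis r_even : forall n, r (2 * n)%N = r n.
Hypothesis r_odd : forall n, r (2 * n + 1)%N = (-1) ^+ n * r n.

Lemma rs_sqr n : r n * r n = 1.
Proof.
elim/ltn_ind: n => -[|n] IH; first by rewrite r0 mulr1.
have lt_half : ((n.+1)./2 < n.+1)%N by lia.
rewrite -[n.+1]odd_double_half -mul2n addnC; case: (odd n.+1) => /=.
  by rewrite r_odd mulrACA -expr2 sqrr_sign mul1r IH.
by rewrite addn0 r_even IH.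
Qed.

Lemma rs_prod_even n : r (2 * n)%N * r (2 * n + 2)%N = r n * r n.+1.
Proof. by rewrite -mulnSr r_even r_even. Qed.

Lemma rs_prod_odd n : r (2 * n).+1 * r ((2 * n).+1 + 2)%N = - (r n * r n.+1).
Proof.
rewrite -addn1 (_ : (2 * n + 1 + 2 = 2 * n.+1 + 1)%N); last by lia.
rewrite !r_odd exprS.
transitivity (- ((-1) ^+ n * (-1) ^+ n) * (r n * r n.+1)); first by ring.
by rewrite -expr2 sqrr_sign mulN1r.
Qed.

Lemma rs_prod_shift2 n :
  r n * r (n + 2)%N = (r n * r n.+1) * (r n.+1 * r n.+2).
Proof. by rewrite addn2 mulrA -(mulrA (r n)) rs_sqr mulr1. Qed.

Lemma rs_prod0 : r 0%N * r 1%N = 1.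
Proof. by have := r_odd 0; rewrite muln0 add0n expr0 mul1r r0 => ->; rewrite mulr1. Qed.

End RudinShapiro.

Unset Implicit Arguments.

Theorem corollary5p12 (r : nat -> int)
  (hr0 : r 0%N = 1)
  (hreven : forall n : nat, r (2 * n)%N = r n)
  (hrodd : forall n : nat, r (2 * n + 1)%N = (-1) ^+ n * r n) :
  forall N n : nat, (n < N)%N ->
    cf_trunc (fun k => r k * r (k + 2)%N) 0 N n = lhs_series n.
Proof.
move=> N; apply: halving_eq_upto_uniq (lhs_series_halving N).
apply: (cf_trunc_halving (d := fun n => r n * r n.+1)).
- exact: rs_prod_even.
- exact: rs_prod_odd.
- exact: rs_prod_shift2 hr0 hreven hrodd.
- exact: rs_prod0 hr0 hrodd.
Qed.
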